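(* Let $\mathcal Z=(Z\to\mathbf P_{M/m})$, $\mathcal Y=(Y\to\mathbf P_{L/l})$, $\mathcal X=(X\to\mathbf P_{K/k})$ be objects of $\mathrm{bir}_G$ and let $h\colon\mathcal Z\to\mathcal Y$, $g\colon\mathcal Y\to\mathcal X$ be morphisms, $f=g\circ h$. Then: (1) if $g$ and $h$ are separated, $f$ is separated; (2) if $f$ is separated, $h$ is separated; (3) if $g$ and $h$ are proper, $f$ is proper; (4) if $f$ and $h$ are proper, $g$ is proper; (5) if $f$ is proper, $g$ is separated and $\psi_{M/m,L/l}$ is surjective (e.g. $m=l$), then $h$ is proper; (6) if $f$ is separated and $h$ is proper, then $g$ is separated.
   Context: $G$ is a commutative multiplicative group. Graded fields: nonzero $G$-graded rings whose nonzero homogeneous elements are invertible. For graded fields $k\subseteq K$, $\mathbf P_{K/k}$ is the set of graded valuation rings $\mathcal O$ of $K$ containing $k$ (graded subrings such that $f\in\mathcal O$ or $f^{-1}\in\mathcal O$ for each nonzero homogeneous $f\in K$), with topology generated by $\{\mathcal O: f_1,\dots,f_n\in\mathcal O\}$, $f_i$ homogeneous. An object of $\mathrm{bir}_G$ is $(X\to\mathbf P_{K/k})$ for some graded field extension $K/k$, with $X\to\mathbf P_{K/k}$ a local homeomorphism from a non-empty connected quasi-compact quasi-separated space. A morphism $(Y\to\mathbf P_{L/l})\to(X\to\mathbf P_{K/k})$ consists of compatible graded embeddings $k\hookrightarrow l$, $K\hookrightarrow L$ (compatible with $k\subseteq K$, $l\subseteq L$) and a continuous map $Y\to X$ compatible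 with $\psi_{L/l,K/k}\colon\mathbf P_{L/l}\to\mathbf P_{K/k}$, $\mathcal O\mapsto\mathcal O\cap K$. It is separated if $Y\to X\times_{\mathbf P_{K/k}}\mathbf P_{L/l}$ is injective, and proper if this map is bijective and $\psi_{L/l,K/k}$ is surjective. *)

From HB Require Import structures.
From mathcomp Require Import all_boot all_algebra.
From mathcomp Require Import boolp classical_sets topology.
Set Implicit Arguments. Unset Strict Implicit. Unset Printing Implicit Defensive.
Import GRing.Theory.
Local Open Scope ring_scope.
Local Open Scope classical_set_scope.

(* The grading group G is a commutative group, written ADDITIVELY as a
   zmodType (so the identity of G is 0 and the group law is +). *)

Section Graded.
Variable G : zmodType.

(* D g = the homogeneous component of degree g of the commutative ring R. *)
Definition is_grading (R : comPzRingType) (D : G -> set R) : Prop :=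
  [/\ (forall g, D g 0 /\ (forall x y, D g x -> D g y -> D g (x - y))),
      D 0 1,
      (forall g h x y, D g x -> D h y -> D (g + h) (x * y)),
      (forall x : R, exists s : seq (G * R),
          [/\ uniq (unzip1 s), (forall p, p \in s -> D p.1 p.2) &
              x = \sum_(p <- s) p.2]) &
      (* ... in a unique way (the sum R = (+)_g D g is direct) *)
      (forall s : seq (G * R), uniq (unzip1 s) ->
          (forall p, p \in s -> D p.1 p.2) ->
          \sum_(p <- s) p.2 = 0 -> forall p, p \in s -> p.2 = 0)].

Definition homog (R : comPzRingType) (D : G -> set R) (x : R) : Prop :=
  exists g, D g x.

Definition is_graded_field (R : comPzRingType) (D : G -> set R) : Prop :=
  [/\ is_grading D, (1 : R) != 0 &
      forall x : R, homog D x -> x != 0 -> exists y, x * y = 1].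

Definition is_graded_embedding (R S : comPzRingType) (DR : G -> set R)
    (DS : G -> set S) (s : R -> S) : Prop :=
  [/\ (forall x y, s (x - y) = s x - s y),
      (forall x y, s (x * y) = s x * s y),
      s 1 = 1,
      injective s &
      (forall g x, DR g x -> DS g (s x))].

Definition is_graded_subring (K : comPzRingType) (DK : G -> set K)
    (O : set K) : Prop :=
  [/\ O 1, (forall x y, O x -> O y -> O (x - y)),
      (forall x y, O x -> O y -> O (x * y)) &
      (forall x, O x -> exists s : seq (G * K),
          (forall p, p \in s -> DK p.1 p.2 /\ O p.2) /\
          x = \sum_(p <- s) p.2)].

(* graded valuation ring of K containing k (k embedded in K via i) *)
Definition is_gvr (k K : comPzRingType) (DK : G -> set K) (i : k -> K)
    (O : set K) : Prop :=
  [/\ is_graded_subring DK O,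
      (forall f, homog DK f -> f != 0 ->
          O f \/ exists f', f * f' = 1 /\ O f') &
      (forall a, O (i a))].

Definition Pspace (k K : comPzRingType) (DK : G -> set K) (i : k -> K) :=
  {O : set K | is_gvr DK i O}.

(* open sets of P_{K/k}: unions of basic opens {O | f_1, ..., f_n in O},
   f_i homogeneous *)
Definition Popen (k K : comPzRingType) (DK : G -> set K) (i : k -> K)
    (S : set (Pspace DK i)) : Prop :=
  forall O, S O -> exists fs : seq K,
    [/\ (forall f, f \in fs -> homog DK f),
        (forall f, f \in fs -> sval O f) &
        (forall O' : Pspace DK i, (forall f, f \in fs -> sval O' f) -> S O')].

Definition local_homeo (X : topologicalType) (k K : comPzRingType)
    (DK : G -> set K) (i : k -> K) (p : X -> Pspace DK i) : Prop :=
  (forall S, Popen S -> open (p @^-1` S)) /\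
  (forall x, exists U : set X,
     [/\ open U, U x,
         (forall x1 x2, U x1 -> U x2 -> p x1 = p x2 -> x1 = x2) &
         (forall V, open V -> V `<=` U -> Popen (p @` V))]).

Definition quasi_separated (X : topologicalType) : Prop :=
  forall U V : set X, open U -> compact U -> open V -> compact V ->
    compact (U `&` V).

Record birObj := BirObj {
  bk : comPzRingType;  Dk : G -> set bk;
  bK : comPzRingType;  DK : G -> set bK;
  bi : bk -> bK;
  bX : topologicalType;
  bpi : bX -> Pspace DK bi;
  bk_field : is_graded_field Dk;
  bK_field : is_graded_field DK;
  bi_emb : is_graded_embedding Dk DK bi;
  bpi_lh : local_homeo bpi;
  bX_nonempty : [set: bX] !=set0;
  bX_connected : connected [set: bX];
  bX_qc : compact [set: bX];
  bX_qs : quasi_separated bX }.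
Arguments Dk : clear implicits.
Arguments DK : clear implicits.
Arguments bi : clear implicits.
Arguments bpi : clear implicits.

(* morphism data (sk, sK, b) : Yo -> Xo, with sk : k -> l, sK : K -> L,
   b : Y -> X ;  psi_{L/l,K/k}(O) = O cap K = sK^{-1}(O) *)
Definition is_bir_mor (Yo Xo : birObj) (sk : bk Xo -> bk Yo)
    (sK : bK Xo -> bK Yo) (b : bX Yo -> bX Xo) : Prop :=
  [/\ is_graded_embedding (Dk Xo) (Dk Yo) sk,
      is_graded_embedding (DK Xo) (DK Yo) sK,
      (forall a, sK (bi Xo a) = bi Yo (sk a)),
      continuous b &
      (forall y, sval (bpi Xo (b y)) = sK @^-1` sval (bpi Yo y))].

Definition psi_surj (Yo Xo : birObj) (sK : bK Xo -> bK Yo) : Prop :=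
  forall O' : Pspace (DK Xo) (bi Xo),
    exists O : Pspace (DK Yo) (bi Yo), sval O' = sK @^-1` sval O.

(* Y -> X x_{P_{K/k}} P_{L/l},  y |-> (b y, pi_Y y)  is injective *)
Definition bir_separated (Yo Xo : birObj) (sK : bK Xo -> bK Yo)
    (b : bX Yo -> bX Xo) : Prop :=
  forall y1 y2, b y1 = b y2 -> bpi Yo y1 = bpi Yo y2 -> y1 = y2.

(* the map above is bijective, and psi_{L/l,K/k} is surjective *)
Definition bir_proper (Yo Xo : birObj) (sK : bK Xo -> bK Yo)
    (b : bX Yo -> bX Xo) : Prop :=
  [/\ bir_separated sK b,
      (forall (x : bX Xo) (O : Pspace (DK Yo) (bi Yo)),
          sval (bpi Xo x) = sK @^-1` sval O ->
          exists y, b y = x /\ bpi Yo y = O) &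
      psi_surj sK].
End Graded.

(* Everything rests on psi_{L/l,K/k} being well defined: for a graded
   valuation ring O of L, O cap K is a graded valuation ring of K.  A graded
   subring contains the homogeneous components of its elements (by uniqueness
   of homogeneous decompositions), so O cap K inherits the decomposition of
   elements of K; the valuation property transfers through the injective
   embedding and uniqueness of inverses.  With psi available, the six
   assertions are diagram chases with the maps Y -> X x_P P_{L/l} and psi,
   using that psi for g o h is the composite of the psi for g and for h. *)

From HB Require Import structures.
From mathcomp Require Import all_boot all_algebra.
From mathcomp Require Import boolp classical_sets topology.
Set Implicit Arguments.
Unset Strict Implicit.
Unset Printing Implicit Defensive.
Import GRing.Theory.
Local Open Scope ring_scope.
Local Open Scope classical_set_scope.

Section GradedRing.
Variables (G : zmodType) (R : comPzRingType).

Lemma subr_closed_sum (P : set R) :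
  P 0 -> (forall x y, P x -> P y -> P (x - y)) ->
  forall (I : eqType) (r : seq I) (Q : pred I) (F : I -> R),
  (forall i, i \in r -> Q i -> P (F i)) -> P (\sum_(i <- r | Q i) F i).
Proof.
move=> P0 PB I r Q F PF; rewrite big_seq_cond; apply: big_ind => //.
  move=> x y Px Py; have -> : x + y = x - (0 - y) by rewrite sub0r opprK.
  exact: PB Px (PB _ _ P0 Py).
by move=> i /andP[/PF].
Qed.

Lemma sum_degree_eq (t : seq (G * R)) (p : G * R) :
  uniq (unzip1 t) -> p \in t -> \sum_(q <- t | q.1 == p.1) q.2 = p.2.
Proof.
elim: t => [|q t IHt] //= /andP[qt ut]; rewrite in_cons big_cons.
case/orP=> [/eqP ->|pt].
  rewrite eqxx big1_seq ?addr0 // => q' /andP[/eqP q'q q't].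
  by case/negP: qt; rewrite -q'q map_f.
rewrite ifF ?IHt //; apply/negP=> /eqP qp.
by case/negP: qt; rewrite qp map_f.
Qed.

Lemma sum_by_degree (ds : seq G) (r : seq (G * R)) :
  uniq ds -> (forall q, q \in r -> q.1 \in ds) ->
  \sum_(d <- ds) \sum_(q <- r | q.1 == d) q.2 = \sum_(q <- r) q.2.
Proof.
move=> uds rds; rewrite (exchange_big_dep xpredT) //= big_seq [RHS]big_seq.
apply: eq_bigr => q qr; rewrite -big_filter.
have -> : [seq d <- ds | q.1 == d] = [:: q.1].
  rewrite -(filter_pred1_uniq uds (rds q qr)).
  by apply: eq_filter => d; rewrite eq_sym.
by rewrite big_seq1.
Qed.

Variable D : G -> set R.
Hypothesis gradingD : is_grading D.

(* [s] may repeat degrees: regrouping it by degree gives a decomposition with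
   distinct degrees, which uniqueness compares with [t]. *)
Lemma homog_component_eq (t s : seq (G * R)) :
  uniq (unzip1 t) -> (forall p, p \in t -> D p.1 p.2) ->
  (forall p, p \in s -> D p.1 p.2) ->
  \sum_(p <- t) p.2 = \sum_(p <- s) p.2 ->
  forall p, p \in t -> p.2 = \sum_(q <- s | q.1 == p.1) q.2.
Proof.
have [Dsub _ _ _ Duniq] := gradingD.
move=> ut Dt Ds ts p pt.
pose ds := undup (unzip1 t ++ unzip1 s).
pose c d := \sum_(q <- t | q.1 == d) q.2 - \sum_(q <- s | q.1 == d) q.2.
pose u := [seq (d, c d) | d <- ds].
have Dc d : D d (c d).
  have [D0 DB] := Dsub d.
  apply: (DB); apply: subr_closed_sum => // q ? /eqP <-.
  - exact: Dt.
  - exact: Ds.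
have in_ds q : q \in t ++ s -> q.1 \in ds.
  by move=> qts; rewrite mem_undup -map_cat map_f.
have u0 : \sum_(q <- u) q.2 = 0.
  rewrite big_map sumrB !sum_by_degree ?undup_uniq ?ts ?subrr //.
    by move=> q qs; apply: in_ds; rewrite mem_cat qs orbT.
  by move=> q qt; apply: in_ds; rewrite mem_cat qt.
have pu : (p.1, c p.1) \in u by rewrite map_f // in_ds // mem_cat pt.
have uu : uniq (unzip1 u) by rewrite /unzip1 -map_comp map_id undup_uniq.
have Du q : q \in u -> D q.1 q.2 by case/mapP=> d _ ->.
by have /subr0_eq <- := Duniq u uu Du u0 _ pu; rewrite sum_degree_eq.
Qed.

Lemma graded_subring_homog_component (O : set R) :
  is_graded_subring D O ->
  forall t : seq (G * R), uniq (unzip1 t) -> (forall p, p \in t -> D p.1 p.2) ->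
  O (\sum_(p <- t) p.2) -> forall p, p \in t -> O p.2.
Proof.
move=> [O1 OB _ Odec] t ut Dt /Odec[s [Os ts]] p pt.
have O0 : O 0 by rewrite -(subrr 1); apply: OB.
rewrite (homog_component_eq ut Dt _ ts pt); last by move=> q /Os[].
by apply: subr_closed_sum => // q /Os[].
Qed.

End GradedRing.

Section GradedEmbedding.
Variables (G : zmodType) (K L : comPzRingType).
Variables (DK : G -> set K) (DL : G -> set L) (s : K -> L).
Hypothesis s_emb : is_graded_embedding DK DL s.

Lemma graded_embedding0 : s 0 = 0.
Proof. by have [sB _ _ _ _] := s_emb; rewrite -(subrr 0) sB subrr. Qed.

Lemma graded_embeddingD : {morph s : x y / x + y}.
Proof.
have [sB _ _ _ _] := s_emb; move=> x y.
have -> : x + y = x - (0 - y) by rewrite sub0r opprK.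
by rewrite !sB graded_embedding0 sub0r opprK.
Qed.

Lemma graded_subring_preimage (O : set L) :
  is_grading DK -> is_grading DL -> is_graded_subring DL O ->
  is_graded_subring DK (s @^-1` O).
Proof.
have [sB sM s1 _ sD] := s_emb.
move=> [_ _ _ Kdec _] gradingL Osub; have [O1 OB OM _] := Osub.
split=> [|x y|x y|x Ox]; rewrite /preimage /= ?s1 ?sB ?sM;
  [exact: O1 | exact: OB | exact: OM |].
have [t [ut Dt xt]] := Kdec x.
exists t; split => // p pt; split; first exact: Dt.
pose st := [seq (q.1, s q.2) | q <- t].
have ust : uniq (unzip1 st) by rewrite /unzip1 -map_comp.
have Dst q : q \in st -> DL q.1 q.2 by case/mapP=> q0 /Dt q0t ->; apply: sD.
have Ost : O (\sum_(q <- st) q.2).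
  by rewrite big_map -(big_morph s graded_embeddingD graded_embedding0) -xt.
exact: (graded_subring_homog_component gradingL Osub ust Dst Ost (map_f _ pt)).
Qed.

Lemma homog_valuation_preimage (O : set L) :
  is_graded_field DK ->
  (forall f, homog DL f -> f != 0 -> O f \/ exists f', f * f' = 1 /\ O f') ->
  (forall f, homog DK f -> f != 0 ->
     (s @^-1` O) f \/ exists f', f * f' = 1 /\ (s @^-1` O) f').
Proof.
have [_ sM s1 s_inj sD] := s_emb.
move=> [_ _ invK] Oval f [g Dgf] f0.
have sf0 : s f != 0.
  apply: contra f0 => /eqP sf0.
  by apply/eqP/s_inj; rewrite sf0 graded_embedding0.
case: (Oval (s f) (ex_intro _ g (sD _ _ Dgf)) sf0) => [|[f' [sff' Of']]].
  by left.
have [y fy] := invK f (ex_intro _ g Dgf) f0.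
right; exists y; split => //; rewrite /preimage /=.
by rewrite -[s y]mul1r -sff' mulrAC -sM fy s1 mul1r.
Qed.

Lemma is_gvr_preimage (k l : comPzRingType) (i : k -> K) (j : l -> L)
    (sk : k -> l) (O : set L) :
  is_graded_field DK -> is_graded_field DL ->
  (forall a, s (i a) = j (sk a)) -> is_gvr DL j O -> is_gvr DK i (s @^-1` O).
Proof.
move=> fieldK [gradingL _ _] sij [Osub Oval Oj]; have [gradingK _ _] := fieldK.
split.
- exact: graded_subring_preimage.
- exact: homog_valuation_preimage.
- by move=> a; rewrite /preimage /= sij; apply: Oj.
Qed.

End GradedEmbedding.

Section Morphisms.
Variable G : zmodType.

Lemma Pspace_val_inj (k K : comPzRingType) (D : G -> set K) (i : k -> K) :
  injective (@sval _ (is_gvr D i)).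
Proof. by move=> O1 O2; apply: eq_sig_hprop => *; apply: Prop_irrelevance. Qed.

Lemma bir_mor_psi_exists (Yo Xo : birObj G) sk sK (b : bX Yo -> bX Xo) :
  is_bir_mor sk sK b -> forall O : Pspace (@DK _ Yo) (@bi _ Yo),
  exists O' : Pspace (@DK _ Xo) (@bi _ Xo), sval O' = sK @^-1` sval O.
Proof.
move=> [_ sK_emb sKi _ _] O.
by exists (exist _ _
  (is_gvr_preimage sK_emb (bK_field Xo) (bK_field Yo) sKi (svalP O))).
Qed.

Variables (Zo Yo Xo : birObj G).
Variables (hk : bk Yo -> bk Zo) (hK : bK Yo -> bK Zo) (hb : bX Zo -> bX Yo).
Variables (gk : bk Xo -> bk Yo) (gK : bK Xo -> bK Yo) (gb : bX Yo -> bX Xo).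
Hypotheses (Hh : is_bir_mor hk hK hb) (Hg : is_bir_mor gk gK gb).

Lemma bir_separated_comp :
  bir_separated gK gb -> bir_separated hK hb ->
  bir_separated (hK \o gK) (gb \o hb).
Proof.
have [_ _ _ _ hpi] := Hh.
move=> g_sep h_sep z1 z2 /= gbhb_eq pi_eq.
apply: h_sep => //; apply: g_sep => //.
by apply: Pspace_val_inj; rewrite !hpi pi_eq.
Qed.

Lemma bir_separated_of_comp :
  bir_separated (hK \o gK) (gb \o hb) -> bir_separated hK hb.
Proof. by move=> f_sep z1 z2 hb_eq; apply: f_sep; rewrite /= hb_eq. Qed.

Lemma bir_separated_of_comp_proper :
  bir_separated (hK \o gK) (gb \o hb) -> bir_proper hK hb ->
  bir_separated gK gb.
Proof.
move=> f_sep [_ h_lift h_psi] y1 y2 gb_eq pi_eq.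
have [O eO] := h_psi (@bpi _ Yo y1).
have [z1 [hz1 pi_z1]] := h_lift y1 O eO.
have /h_lift[z2 [hz2 pi_z2]] : sval (@bpi _ Yo y2) = hK @^-1` sval O
  by rewrite -pi_eq.
subst y1 y2; congr hb.
by apply: f_sep => //=; rewrite pi_z1 pi_z2.
Qed.

Lemma bir_proper_comp :
  bir_proper gK gb -> bir_proper hK hb -> bir_proper (hK \o gK) (gb \o hb).
Proof.
move=> [g_sep g_lift g_psi] [h_sep h_lift h_psi]; split.
- exact: bir_separated_comp.
- move=> x O eO; have [O' eO'] := bir_mor_psi_exists Hh O.
  have /g_lift[y [<- pi_y]] : sval (@bpi _ Xo x) = gK @^-1` sval O'
    by rewrite eO'.
  have /h_lift[z [<- pi_z]] : sval (@bpi _ Yo y) = hK @^-1` sval O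
    by rewrite pi_y.
  by exists z.
- move=> O; have [O' eO'] := g_psi O; have [O'' eO''] := h_psi O'.
  by exists O''; rewrite eO' eO''.
Qed.

Lemma bir_proper_of_comp :
  bir_proper (hK \o gK) (gb \o hb) -> bir_proper hK hb -> bir_proper gK gb.
Proof.
have [_ _ _ _ hpi] := Hh.
move=> [f_sep f_lift f_psi] h_prop; have [_ _ h_psi] := h_prop.
split.
- exact: bir_separated_of_comp_proper f_sep h_prop.
- move=> x O eO; have [O' eO'] := h_psi O.
  have /f_lift[z [<- pi_z]] : sval (@bpi _ Xo x) = (hK \o gK) @^-1` sval O'
    by rewrite eO eO'.
  by exists (hb z); split => //; apply: Pspace_val_inj; rewrite hpi pi_z eO'.
- move=> O; have [O' eO'] := f_psi O.
  have [O'' eO''] := bir_mor_psi_exists Hh O'.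
  by exists O''; rewrite eO' eO''.
Qed.

Lemma bir_proper_of_comp_separated :
  bir_proper (hK \o gK) (gb \o hb) -> bir_separated gK gb -> psi_surj hK ->
  bir_proper hK hb.
Proof.
have [_ _ _ _ gpi] := Hg; have [_ _ _ _ hpi] := Hh.
move=> [f_sep f_lift _] g_sep h_psi; split => //.
- exact: bir_separated_of_comp.
- move=> y O eO.
  have /f_lift[z [gbhb_z pi_z]] :
      sval (@bpi _ Xo (gb y)) = (hK \o gK) @^-1` sval O by rewrite gpi eO.
  exists z; split => //; apply: g_sep => //.
  by apply: Pspace_val_inj; rewrite hpi pi_z eO.
Qed.

End Morphisms.

Unset Implicit Arguments.
Theorem lemma7p2 (G : zmodType) (Zo Yo Xo : birObj G)
  (hk : bk Yo -> bk Zo) (hK : bK Yo -> bK Zo) (hb : bX Zo -> bX Yo)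
  (gk : bk Xo -> bk Yo) (gK : bK Xo -> bK Yo) (gb : bX Yo -> bX Xo)
  (Hh : is_bir_mor hk hK hb) (Hg : is_bir_mor gk gK gb) :
  (* (1) *)
  (bir_separated gK gb -> bir_separated hK hb ->
     bir_separated (hK \o gK) (gb \o hb)) /\
  (* (2) *)
  (bir_separated (hK \o gK) (gb \o hb) -> bir_separated hK hb) /\
  (* (3) *)
  (bir_proper gK gb -> bir_proper hK hb ->
     bir_proper (hK \o gK) (gb \o hb)) /\
  (* (4) *)
  (bir_proper (hK \o gK) (gb \o hb) -> bir_proper hK hb ->
     bir_proper gK gb) /\
  (* (5) *)
  (bir_proper (hK \o gK) (gb \o hb) -> bir_separated gK gb ->
     psi_surj hK -> bir_proper hK hb) /\
  (* (6) *)
  (bir_separated (hK \o gK) (gb \o hb) -> bir_proper hK hb ->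
     bir_separated gK gb).
Proof.
split; first exact: bir_separated_comp Hh.
split; first exact: bir_separated_of_comp.
split; first exact: bir_proper_comp Hh.
split; first exact: bir_proper_of_comp Hh.
split; first exact: bir_proper_of_comp_separated Hh Hg.
exact: bir_separated_of_comp_proper.
Qed.
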